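(* For any $n\geq2$ there is a set $\Pi$ of permutations of $[n]=\{1,\dots,n\}$ with $|\Pi|\leq C^n$, where $C>0$ is a universal constant, having the following property. Let $p\in(0,1/2]$, $\delta\in(0,1/2]$, $s\in[-1,0]$, $\nu\in(0,1]$, $L\geq1$, and $x\in\mathrm{Incomp}_n(\delta,\nu)$. Then there is $\sigma\in\Pi$ such that the vector $\widetilde y=(\mathbf Y_{\sigma(i)}(p,x,L,s))_{i=1}^n$ satisfies $$|\widetilde y_i|>\frac{\nu}{\mathcal T_p(x,L)}-1\quad\text{for all } i\leq\delta n,$$ and $$|\widetilde y_i|\leq \frac{2^{(j+1)/2}}{\sqrt\delta\,\mathcal T_p(x,L)}+1\quad\text{for all } i>2^{-j}\delta n,\ \ 0\leq j\leq\log_2(\delta n).$$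
   Context: For $\delta,\nu\in(0,1]$, $\mathrm{Comp}_n(\delta,\nu)$ is the set of unit vectors $x\in\mathbb{R}^n$ for which there exists $y\in\mathbb{R}^n$ with at most $\delta n$ nonzero coordinates and $\|x-y\|_2\leq\nu$, and $\mathrm{Incomp}_n(\delta,\nu)=S^{n-1}\setminus\mathrm{Comp}_n(\delta,\nu)$. The Lévy concentration function is $\mathcal L(\xi,t)=\sup_{\lambda}\mathbb{P}\{|\xi-\lambda|\leq t\}$. For $p\in(0,1/2]$, $x\in S^{n-1}$, $L>0$, the threshold $\mathcal T_p(x,L)$ is the supremum of all $t\in(0,1]$ with $\mathcal L(\sum_i b_ix_i,t)>Lt$, where $b_1,\dots,b_n$ are independent Bernoulli($p$) variables (value $1$ with probability $p$, $0$ otherwise); it is positive. There are universal constants $C',c'>0$ such that for each $p\in(0,1/2]$, $s\in[-1,0]$, $x\in S^{n-1}$, $L\geq1$ one fixes a vector $\mathbf Y(p,x,L,s)\in\mathbb{Z}^n$ satisfying: $\|\frac{\sqrt n}{\mathcal T_p(x,L)}x-\mathbf Y(p,x,L,s)\|_\infty\leq1$; $\mathbb{P}\{|\sum_ib_i\mathbf Y_i(p,x,L,s)+\frac{s\sqrt n}{\mathcal T_p(x,L)}\sum_ix_i|\leq t\}\leq \frac{C'L\mathcal T_p(x,L)}{\sqrt n}t$ for all $t\geq\sqrt n$; $\mathcal L(\sum_ib_i\mathbf Y_i(p,x,L,s),\sqrt n)\geq c'L\mathcal T_p(x,L)$; and $|\frac{\sqrt n}{\mathcal T_p(x,L)}\sum_ix_i-\sum_i\mathbf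 Y_i(p,x,L,s)|\leq C'\sqrt n$ (such vectors exist). *)

From HB Require Import structures.
From mathcomp Require Import all_boot all_order all_algebra all_fingroup.
From mathcomp Require Import all_classical all_reals.
Set Implicit Arguments. Unset Strict Implicit. Unset Printing Implicit Defensive.
Import Order.TTheory GRing.Theory Num.Theory.
Local Open Scope ring_scope.
Local Open Scope classical_set_scope.

Section Defs.
Variables (R : realType) (n : nat).

(* Probability that a vector b of independent Bernoulli(p) variables
   (b i = true means value 1, with probability p) satisfies P. *)
Definition bern_prob (p : R) (P : {ffun 'I_n -> bool} -> bool) : R :=
  \sum_(b : {ffun 'I_n -> bool} | P b) \prod_(i < n) (if b i then p else 1 - p).

Definition bsum (a : 'I_n -> R) (b : {ffun 'I_n -> bool}) : R :=
  \sum_(i < n) (b i)%:R * a i.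

Definition levy (p : R) (a : 'I_n -> R) (t : R) : R :=
  sup [set bern_prob p (fun b => `|bsum a b - lam| <= t) | lam in [set: R]].

Definition threshold (p : R) (x : 'I_n -> R) (L : R) : R :=
  sup [set t : R | 0 < t <= 1 /\ levy p x t > L * t].

Definition norm2 (x : 'I_n -> R) : R := Num.sqrt (\sum_(i < n) x i ^+ 2).

Definition unit_vec (x : 'I_n -> R) : Prop := norm2 x = 1.

Definition Comp (delta nu : R) (x : 'I_n -> R) : Prop :=
  unit_vec x /\
  exists y : 'I_n -> R,
    (#|[set i : 'I_n | y i != 0]|%:R <= delta * n%:R) /\
    norm2 (fun i => x i - y i) <= nu.

Definition Incomp (delta nu : R) (x : 'I_n -> R) : Prop :=
  unit_vec x /\ ~ Comp delta nu x.

Definition Y_props (C' c' : R)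
  (Y : R -> ('I_n -> R) -> R -> R -> ('I_n -> int)) : Prop :=
  forall (p : R) (x : 'I_n -> R) (L s : R),
    0 < p <= 1/2 -> -1 <= s <= 0 -> unit_vec x -> 1 <= L ->
    let T := threshold p x L in
    let y := fun i => ((Y p x L s i)%:~R : R) in
    [/\ (forall i, `|Num.sqrt n%:R / T * x i - y i| <= 1),
        (forall t, Num.sqrt n%:R <= t ->
           bern_prob p (fun b => `|bsum y b
              + s * Num.sqrt n%:R / T * \sum_(i < n) x i| <= t)
           <= C' * L * T / Num.sqrt n%:R * t),
        c' * L * T <= levy p y (Num.sqrt n%:R) &
        `|Num.sqrt n%:R / T * \sum_(i < n) x i - \sum_(i < n) y i|
          <= C' * Num.sqrt n%:R].

End Defs.

From HB Require Import structures.
From mathcomp Require Import all_boot all_order all_algebra all_fingroup.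
From mathcomp Require Import all_classical all_reals.
From mathcomp Require Import zify lra.
Import Order.TTheory GRing.Theory Num.Theory.
Set Implicit Arguments. Unset Strict Implicit. Unset Printing Implicit Defensive.

(* Sort the coordinates of x by decreasing modulus and call rank c the position
   of coordinate c.  Incompressibility forces the coordinates of rank below
   m = floor(delta n) to exceed nu / sqrt n, and the unit norm forces the
   coordinate of rank r to be at most 1 / sqrt (r + 1).  It therefore suffices
   to place at each position i < m a coordinate of rank < m, and at every
   position i a coordinate of rank r with i + 1 <= 2 (r + 1).  Such a placement
   only depends on which ranks lie below m and on the dyadic levels
   floor(log2 (n / (r + 1))) of the ranks.  These levels sum to at most n, so in
   unary they fit into 2n bits; one representative permutation for each value
   of m and of these 3n bits gives a net of at most 16^n permutations.  The
   bounds on Y then follow from |sqrt n x_i / T - Y_i| <= 1. *)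

Lemma card_ord_lt n q : q <= n -> #|[set i : 'I_n | i < q]| = q.
Proof. by move=> qn; rewrite -sum1dep_card -(big_ord_widen _ (fun=> 1) qn) sum1_card card_ord. Qed.

Lemma sum_ord_lt n q : q <= n -> \sum_(i < n) (i < q : nat) = q.
Proof.
move=> qn; rewrite -[RHS](card_ord_lt qn) -sum1dep_card [RHS]big_mkcond /=.
by apply: eq_bigr => i _; case: (i < q).
Qed.

Lemma sum_div_exp2 N n : \sum_(k < N) n %/ 2 ^ k.+1 <= n.
Proof.
elim: N n => [|N IH] n; first by rewrite big_ord0.
rewrite big_ord_recl expn1.
under eq_bigr do rewrite lift0 expnS divnMA.
apply: leq_trans (leq_add (leqnn _) (IH _)) _.
by rewrite addnn -muln2 leq_divM.
Qed.

Definition dyadic_level n i := trunc_log 2 (n %/ i.+1).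

Lemma dyadic_level_le n i : dyadic_level n i <= n.
Proof.
rewrite /dyadic_level; set q := n %/ i.+1.
have qn : q <= n by exact: leq_div.
case: (posnP q) => [-> | q0]; first by rewrite trunc_log0.
apply: leq_trans qn; apply: leq_trans (trunc_logP (isT : 1 < 2) q0).
exact: ltnW (ltn_expl _ (isT : 1 < 2)).
Qed.

Lemma dyadic_level_gt n i k : i < n -> (k < dyadic_level n i) = (i < n %/ 2 ^ k.+1).
Proof.
move=> lt_in; have q0 : 0 < n %/ i.+1 by rewrite divn_gt0.
rewrite leq_divRL ?expn_gt0 // mulnC -leq_divRL //.
apply/idP/idP => [lt_k | ]; last exact: trunc_log_max.
by apply: leq_trans (trunc_logP (isT : 1 < 2) q0); rewrite leq_exp2l.
Qed.

Lemma sum_dyadic_level n : \sum_(i < n) dyadic_level n i <= n.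
Proof.
under eq_bigr do rewrite -(sum_ord_lt (dyadic_level_le n _)).
rewrite exchange_big /=; apply: leq_trans (sum_div_exp2 n n).
apply: leq_sum => k _.
under eq_bigr do rewrite dyadic_level_gt //.
by rewrite sum_ord_lt // leq_div.
Qed.

Lemma dyadic_level_eq_le n i j : i < n -> j < n ->
  dyadic_level n i = dyadic_level n j -> i.+1 <= 2 * j.+1.
Proof.
move=> lt_in lt_jn eq_ij.
have q0 : 0 < n %/ i.+1 by rewrite divn_gt0.
have lb := trunc_logP (isT : 1 < 2) q0.
have ub := trunc_log_ltn (n %/ j.+1) (isT : 1 < 2).
rewrite -/(dyadic_level n i) leq_divRL // in lb.
rewrite -/(dyadic_level n j) -eq_ij ltn_divLR // expnS in ub.
have : 2 ^ dyadic_level n i * i.+1 < 2 ^ dyadic_level n i * (2 * j.+1).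
  by apply: leq_ltn_trans lb _; rewrite mulnA (mulnC (2 ^ _)).
by rewrite ltn_pmul2l ?expn_gt0 // => /ltnW.
Qed.

Definition unary_code (s : seq nat) : seq bool :=
  flatten [seq rcons (nseq a true) false | a <- s].

Lemma size_unary_code s : size (unary_code s) = sumn s + size s.
Proof.
elim: s => //= a s IH.
by rewrite size_cat IH size_rcons size_nseq addnS addSn addnA.
Qed.

Lemma unary_cat_inj a b u v :
  nseq a true ++ false :: u = nseq b true ++ false :: v -> a = b /\ u = v.
Proof. by elim: a b => [|a IH] [|b] //= [] => [| /IH[->]]. Qed.

Lemma unary_code_cat_inj s1 s2 t1 t2 : size s1 = size s2 ->
  unary_code s1 ++ t1 = unary_code s2 ++ t2 -> s1 = s2.
Proof.
elim: s1 s2 => [|a s1 IH] [|b s2] //= [eq_size].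
by rewrite -!catA -!cats1 -!catA => /unary_cat_inj[-> /(IH _ eq_size) ->].
Qed.

Definition bits N (s : seq bool) : {ffun 'I_N -> bool} := [ffun k : 'I_N => nth false s k].

Lemma bits_eq_pad N s1 s2 : size s1 <= N -> size s2 <= N -> bits N s1 = bits N s2 ->
  s1 ++ nseq (N - size s1) false = s2 ++ nseq (N - size s2) false.
Proof.
move=> le1 le2 eq12; apply: (@eq_from_nth _ false).
  by rewrite !size_cat !size_nseq !subnKC.
move=> k; rewrite size_cat size_nseq subnKC // => lt_kN.
have := congr1 (fun f : {ffun 'I_N -> bool} => f (Ordinal lt_kN)) eq12; rewrite !ffunE /=.
have nth_pad s m : nth false (s ++ nseq m false) k = nth false s k.
  by rewrite nth_cat nth_nseq if_same; case: ltnP => // /(nth_default false).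
by rewrite !nth_pad.
Qed.

Lemma bits_unary_code_inj N s1 s2 : size s1 = size s2 ->
  sumn s1 + size s1 <= N -> sumn s2 + size s2 <= N ->
  bits N (unary_code s1) = bits N (unary_code s2) -> s1 = s2.
Proof.
move=> eq_size; rewrite -!size_unary_code => le1 le2.
by move=> /(bits_eq_pad le1 le2) /(unary_code_cat_inj eq_size).
Qed.

Lemma exists_code_transversal (T K : finType) (code : T -> K) :
  exists2 P : {set T}, #|P| <= #|K| & forall t, exists2 u, u \in P & code u = code t.
Proof.
pose P := [set u | [pick v | code v == code u] == Some u].
exists P => [|t].
  rewrite -(card_in_imset (f := code)) ?max_card // => u1 u2.
  by rewrite !inE => /eqP pick1 /eqP pick2 eq12; move: pick1; rewrite eq12 pick2 => -[].
case def_u: [pick v | code v == code t] => [u|]; last first.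
  by move: def_u; case: pickP => // /(_ t); rewrite eqxx.
have eq_ut : code u = code t by move: def_u; case: pickP => // v /eqP eq_vt [<-].
by exists u; rewrite // inE eq_ut def_u.
Qed.

Section PermNet.
Variable n : nat.

Definition rank_profile (m : nat) (g : {perm 'I_n}) :=
  ([ffun c => g c < m], bits (n + n) (unary_code [seq dyadic_level n (g c) | c <- enum 'I_n])).

Lemma rank_profile_inj m g1 g2 : rank_profile m g1 = rank_profile m g2 ->
  forall c, (g1 c < m) = (g2 c < m) /\ dyadic_level n (g1 c) = dyadic_level n (g2 c).
Proof.
have levels_small (g : {perm 'I_n}) :
    let s := [seq dyadic_level n (g c) | c <- enum 'I_n] in sumn s + size s <= n + n.
  rewrite /= size_map size_enum_ord leq_add2r sumnE big_map enumT.
  rewrite (reindex_inj (@perm_inj _ g^-1)) /=.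
  by under eq_bigr do rewrite permKV; exact: sum_dyadic_level.
case=> /ffunP lt_eq /bits_unary_code_inj levels_eq c; split.
  by have := lt_eq c; rewrite !ffunE.
have /eq_in_map/(_ c) :
    [seq dyadic_level n (g1 c) | c <- enum 'I_n] = [seq dyadic_level n (g2 c) | c <- enum 'I_n].
  by apply: levels_eq; [rewrite !size_map | apply: levels_small..].
by apply; rewrite mem_enum.
Qed.

Lemma perm_net : exists2 Pi : {set {perm 'I_n}}, #|Pi| <= 16 ^ n &
  forall (rank : {perm 'I_n}) m, m <= n -> exists2 s, s \in Pi &
    forall i : 'I_n, (i < m -> rank (s i) < m) /\ i.+1 <= 2 * (rank (s i)).+1.
Proof.
pose code (t : 'I_n.+1 * {perm 'I_n}) := (t.1, rank_profile t.1 t.2).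
have [P card_P transP] := exists_code_transversal code.
exists [set (t.2)^-1 | t in P]%g.
  apply: leq_trans (leq_imset_card _ _) (leq_trans card_P _).
  rewrite !card_prod !card_ffun !card_bool !card_ord mulnC -expnD.
  have -> : 16 ^ n = 2 ^ (n + (n + n)) * 2 ^ n by rewrite -expnD -(expnM 2 4); congr (2 ^ _); lia.
  exact: leq_mul (leqnn _) (ltn_expl _ (isT : 1 < 2)).
move=> rank m le_mn.
have [[m' g] inP [eq_m flags_eq levels_eq]] := transP (Ordinal (le_mn : m < n.+1), rank).
have eq_prof : rank_profile m g = rank_profile m rank.
  by rewrite /rank_profile levels_eq -flags_eq eq_m.
exists g^-1%g; first by apply/imsetP; exists (m', g).
move=> i; have [lt_eq level_eq] := rank_profile_inj eq_prof (g^-1%g i).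
rewrite permKV in lt_eq level_eq; rewrite -lt_eq; split => //.
exact: dyadic_level_eq_le.
Qed.

End PermNet.

Lemma exists_sorting_perm d (T : orderType d) n (f : 'I_n -> T) :
  exists pi : {perm 'I_n}, forall i j : 'I_n, i <= j -> (f (pi j) <= f (pi i))%O.
Proof.
pose le_f (a b : 'I_n) := (f b <= f a)%O.
have le_f_total : total le_f by move=> a b; exact: le_total.
have le_f_trans : transitive le_f by move=> a b c /= h1 h2; exact: le_trans h2 h1.
pose s := sort le_f (enum 'I_n).
have size_s : size s = n by rewrite size_sort size_enum_ord.
have nth_s (i : 'I_n) a : nth a s i = nth i s i.
  by apply: set_nth_default; rewrite size_s.
have inj_s : injective (fun i : 'I_n => nth i s i).
  move=> i j /eqP; rewrite -(nth_s j i) nth_uniq ?size_s // ?sort_uniq ?enum_uniq //.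
  by move/eqP/val_inj.
exists (perm inj_s) => i j le_ij; rewrite !permE -(nth_s j i).
apply: (sorted_leq_nth le_f_trans) => //; rewrite ?inE ?size_s //.
  by move=> a; exact: lexx.
exact: sort_sorted.
Qed.

Local Open Scope ring_scope.

Lemma sorted_rank_bound (R : numDomainType) n (f : 'I_n -> R) (pi : {perm 'I_n}) :
  (forall i, 0 <= f i) -> (forall i j : 'I_n, (i <= j)%N -> f (pi j) <= f (pi i)) ->
  forall r : 'I_n, r.+1%:R * f (pi r) <= \sum_i f i.
Proof.
move=> f_ge0 f_sorted r.
rewrite (reindex_inj (@perm_inj _ pi)) (bigID [pred i : 'I_n | (i < r.+1)%N]) /=.
rewrite -[leLHS]addr0 lerD ?sumr_ge0 //.
rewrite -[in leLHS](card_ord_lt (ltn_ord r)) -sum1dep_card natr_sum mulr_suml.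
by apply: ler_sum => i le_ir; rewrite mul1r f_sorted.
Qed.

Lemma incomp_sorted_coord_gt (R : realType) n (x : 'I_n -> R) (pi : {perm 'I_n})
    (delta nu : R) (r : 'I_n) :
  0 <= nu -> Incomp delta nu x ->
  (forall i j : 'I_n, (i <= j)%N -> x (pi j) ^+ 2 <= x (pi i) ^+ 2) ->
  r%:R <= delta * n%:R -> nu ^+ 2 < n%:R * x (pi r) ^+ 2.
Proof.
move=> nu_ge0 [unit_x not_comp] x_sorted r_small; rewrite ltNge; apply/negP => x_small.
apply: not_comp; split => //.
exists (fun c => if ((pi^-1)%g c < r)%N then x c else 0); split.
  apply: le_trans r_small; rewrite ler_nat -[leqRHS](card_ord_lt (ltnW (ltn_ord r))).
  rewrite -(card_preimset _ (@perm_inj _ (pi^-1)%g)).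
  apply: subset_leq_card; apply/fintype.subsetP => c; rewrite in_setE /= !inE.
  by case: ifP; rewrite ?eqxx.
have n_gt0 : 0 < n%:R :> R by rewrite ltr0n (leq_ltn_trans (leq0n r) (ltn_ord r)).
rewrite /norm2 -(ger0_norm nu_ge0) -sqrtr_sqr ler_sqrt ?sqr_ge0 //.
apply: le_trans (_ : \sum_(c < n) nu ^+ 2 / n%:R <= _); last first.
  by rewrite sumr_const card_ord -[_ *+ n]mulr_natr divfK ?gt_eqF.
apply: ler_sum => c _; case: ifP => [_ | ge_r].
  by rewrite subrr expr0n divr_ge0 ?sqr_ge0 ?ler0n.
rewrite subr0 ler_pdivlMr // mulrC -(permKV pi c); apply: le_trans x_small.
by rewrite ler_pM2l // x_sorted // leqNgt ge_r.
Qed.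

(* Also covers the degenerate case T = 0, where division by 0 yields 0. *)
Lemma approx_norm_gt (R : rcfType) (N T u y nu : R) : 0 <= N -> 0 <= T -> 0 <= nu ->
  `|Num.sqrt N / T * u - y| <= 1 -> nu ^+ 2 < N * u ^+ 2 -> nu / T - 1 < `|y|.
Proof.
move=> N_ge0 T_ge0 nu_ge0 approx lt_nu.
have ge_y : `|Num.sqrt N / T * u| - 1 <= `|y|.
  by have := lerB_dist (Num.sqrt N / T * u) y; lra.
have [->|T_gt0] := eqVneq T 0.
  by rewrite invr0 mulr0 sub0r (lt_le_trans _ (normr_ge0 y)) // ltrN10.
have {}T_gt0 : 0 < T by rewrite lt_def T_gt0.
apply: lt_le_trans ge_y; rewrite ltrD2r normrM ger0_norm ?divr_ge0 ?sqrtr_ge0 //.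
rewrite mulrAC ltr_pM2r ?invr_gt0 // -(ger0_norm nu_ge0) -sqrtr_sqr -sqrtr_sqr -sqrtrM //.
by rewrite ltr_sqrt // (le_lt_trans _ lt_nu) ?sqr_ge0.
Qed.

Lemma approx_norm_le (R : rcfType) (N T u y B D : R) : 0 <= N -> 0 <= T -> 0 < D ->
  `|Num.sqrt N / T * u - y| <= 1 -> D * (N * u ^+ 2) <= B ->
  `|y| <= Num.sqrt B / (Num.sqrt D * T) + 1.
Proof.
move=> N_ge0 T_ge0 D_gt0 approx le_B.
have le_y : `|y| <= `|Num.sqrt N / T * u| + 1.
  by have := lerB_dist y (Num.sqrt N / T * u); rewrite distrC; lra.
apply: le_trans le_y _; rewrite lerD2r normrM ger0_norm ?divr_ge0 ?sqrtr_ge0 //.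
rewrite invfM mulrA mulrAC; apply: ler_wpM2r; first by rewrite invr_ge0.
have N_u_ge0 : 0 <= N * u ^+ 2 by rewrite mulr_ge0 ?sqr_ge0.
rewrite ler_pdivlMr ?sqrtr_gt0 // -sqrtr_sqr -!sqrtrM // ler_sqrt; last first.
  exact: le_trans (mulr_ge0 (ltW D_gt0) N_u_ge0) le_B.
by rewrite mulrC.
Qed.

Lemma dyadic_sq_bound (R : realFieldType) (d N P a i r : R) : 0 < P -> 0 <= a ->
  r * a <= 1 -> i <= 2 * r -> d * N / P < i -> d * (N * a) <= 2 * P.
Proof.
move=> P_gt0 a_ge0 ra_le1 i_le lt_i; rewrite ltr_pdivrMr // in lt_i.
have : d * N * a <= i * P * a by rewrite ler_wpM2r // ltW.
have : i * P * a <= 2 * r * P * a by rewrite ler_wpM2r // ler_wpM2r // ltW.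
nra.
Qed.

Lemma threshold_ge0 (R : realType) n p (x : 'I_n -> R) L : 0 <= threshold p x L.
Proof.
rewrite /threshold; set S := (X in sup X).
have [[t St]|S0] := pselect (exists t, S t).
  have S_ub : has_ubound S by exists 1 => y [/andP[_ ->]].
  have [/andP[t_gt0 _] _] := St.
  exact: le_trans (ltW t_gt0) (ub_le_sup S_ub St).
have -> : S = set0 by apply/seteqP; split => y // Sy; apply: S0; exists y.
by rewrite sup0.
Qed.

Lemma unit_vec_sum_sqr (R : realType) n (x : 'I_n -> R) : unit_vec x -> \sum_i x i ^+ 2 = 1.
Proof.
move=> norm1; have sum_ge0 : 0 <= \sum_i x i ^+ 2 by apply: sumr_ge0 => i _; exact: sqr_ge0.
by rewrite -(sqr_sqrtr sum_ge0) -[Num.sqrt _]/(norm2 x) norm1 expr1n.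
Qed.

Theorem lemma5p3 (R : realType) :
  exists C : R, 0 < C /\
  forall (n : nat), (2 <= n)%N ->
  forall (C' c' : R), 0 < C' -> 0 < c' ->
  forall Y : R -> ('I_n -> R) -> R -> R -> ('I_n -> int),
  Y_props C' c' Y ->
  exists Pi : {set {perm 'I_n}},
    #|Pi|%:R <= C ^+ n /\
    forall (p delta s nu L : R) (x : 'I_n -> R),
      0 < p <= 1/2 -> 0 < delta <= 1/2 -> -1 <= s <= 0 -> 0 < nu <= 1 ->
      1 <= L -> Incomp delta nu x ->
      exists2 sigma, sigma \in Pi &
        let T := threshold p x L in
        let yt := fun i : 'I_n => ((Y p x L s (sigma i))%:~R : R) in
        (forall i : 'I_n, (i.+1)%:R <= delta * n%:R -> `|yt i| > nu / T - 1) /\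
        (forall (j : nat) (i : 'I_n), 2 ^+ j <= delta * n%:R ->
           (i.+1)%:R > delta * n%:R / 2 ^+ j ->
           `|yt i| <= Num.sqrt (2 ^+ j.+1) / (Num.sqrt delta * T) + 1).
Proof.
exists 16; split => // n _ C' c' _ _ Y Y_spec.
have [Pi card_Pi net_Pi] := perm_net n.
exists Pi; split; first by rewrite -natrX ler_nat.
move=> p delta s nu L x p_range /andP[delta_gt0 delta_le] s_range /andP[nu_gt0 _] L_ge1 incomp_x.
have [pi x_sorted] := exists_sorting_perm (fun i => x i ^+ 2).
have dn_ge0 : 0 <= delta * n%:R := mulr_ge0 (ltW delta_gt0) (ler0n _ _).
set m := Num.truncn (delta * n%:R).
have le_mn : (m <= n)%N.
  rewrite truncn_le_nat (@le_lt_trans _ _ n%:R) ?ltr_nat // ler_piMl ?ler0n //.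
  by apply: le_trans delta_le _; lra.
have [sigma sigma_Pi sigma_rank] := net_Pi (pi^-1)%g m le_mn.
exists sigma => //=; have [approx _ _ _] := Y_spec p x L s p_range s_range incomp_x.1 L_ge1.
have T_ge0 := threshold_ge0 p x L.
split => [i i_top | j i _ i_large]; have [rank_top rank_le] := sigma_rank i.
- have r_small : ((pi^-1)%g (sigma i))%:R <= delta * n%:R.
    by rewrite -truncn_ge_nat // ltnW // rank_top // truncn_ge_nat.
  have := incomp_sorted_coord_gt (ltW nu_gt0) incomp_x x_sorted r_small.
  by rewrite permKV; apply: approx_norm_gt (ler0n _ _) T_ge0 (ltW nu_gt0) (approx _).
- apply: approx_norm_le (ler0n _ _) T_ge0 delta_gt0 (approx _) _.
  have := sorted_rank_bound (fun i => sqr_ge0 (x i)) x_sorted ((pi^-1)%g (sigma i)).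
  rewrite permKV (unit_vec_sum_sqr incomp_x.1) => rank_bound.
  rewrite [2 ^+ j.+1]exprS; apply: (dyadic_sq_bound _ (sqr_ge0 _) rank_bound _ i_large).
  - exact: exprn_gt0.
  - by rewrite -natrM ler_nat.
Qed.
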